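(* Let $k\ge2$ and define $n_0(k)=2k+1$ for $k\ge3$ and $n_0(2)=6$. Then $\chi_D(LG_1(k,n))=3$ for all $n\ge n_0(k)$.
   Context: For integers $n,k$ with $2k<n$, $LG_1(k,n)$ is the bipartite graph with parts $L=\binom{[n]}{k-1}$ (the $(k-1)$-subsets of $[n]$) and $R=\binom{[n]}{k}$ (the $k$-subsets of $[n]$), where $u\in L$ and $v\in R$ are adjacent iff $u\subset v$. A coloring is distinguishing if the only graph automorphism mapping every color class onto itself is the identity; $\chi_D(G)$ is the minimum number of colors of a proper distinguishing coloring of $G$. *)

From HB Require Import structures.
From mathcomp Require Import all_boot all_order all_fingroup.
Set Implicit Arguments. Unset Strict Implicit. Unset Printing Implicit Defensive.

Definition graph_aut (T : finType) (e : rel T) (f : {perm T}) : Prop :=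
  forall x y, e (f x) (f y) = e x y.

Definition proper_col (T : finType) (e : rel T) (m : nat) (c : T -> 'I_m) : Prop :=
  forall x y, e x y -> c x != c y.

Definition distinguishing (T : finType) (e : rel T) (m : nat) (c : T -> 'I_m) : Prop :=
  forall f : {perm T}, graph_aut e f -> (forall x, c (f x) = c x) -> f = 1%g.

Definition has_pdc (T : finType) (e : rel T) (m : nat) : Prop :=
  exists c : T -> 'I_m, proper_col e c /\ distinguishing e c.

Definition chiD_is (T : finType) (e : rel T) (m : nat) : Prop :=
  has_pdc e m /\ forall m', has_pdc e m' -> m <= m'.

(* Vertices of LG_1(k,n): the (k-1)-subsets and k-subsets of [n] = 'I_n. *)
Definition LGvert (n k : nat) :=
  {A : {set 'I_n} | (#|A| == k.-1) || (#|A| == k)}.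

Definition LGadj (n k : nat) : rel (LGvert n k) :=
  fun u v => [&& #|val u| == k.-1, #|val v| == k & val u \subset val v]
          || [&& #|val v| == k.-1, #|val u| == k & val v \subset val u].

Definition n0 (k : nat) : nat := if k == 2 then 6 else (2 * k).+1.

From mathcomp Require Import all_boot all_order all_fingroup.
From mathcomp Require Import zify.
Set Implicit Arguments. Unset Strict Implicit. Unset Printing Implicit Defensive.

(* Two colors never suffice: a vertex containing exactly one of two points
   a, b has a common neighbour with its image under the automorphism induced
   by the transposition of a and b, so every proper 2-coloring is invariant
   under it.
   Three colors suffice: give the (k-1)-sets color 0 and the k-sets color 2
   or 1 according to whether they lie in a family F of k-sets.  A
   color-preserving automorphism preserves both sides, so it induces a
   bijection h of the (k-1)-sets such that three sets lie in a common k-set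
   iff their images do.  Intersecting the images of all supersets of an
   (m-1)-set gives a map with the same property one level down; at the level
   of singletons this yields a permutation s of [n] inducing the automorphism.
   Then s stabilizes F, and F is chosen with only the identity in its
   stabilizer: the k-intervals of [n] plus one extra block breaking the
   reflection symmetry. *)

Section LevelIso.
Variable T : finType.
Implicit Types A B C X Y Z : {set T}.

(* Three m-sets spanning at most m+1 points are exactly three m-subsets of a
   common (m+1)-set; pairs would not tell these apart from m-sets sharing a
   common (m-1)-set. *)
Definition level_hom m (h h' : {set T} -> {set T}) :=
  (forall A, #|A| = m -> #|h A| = m /\ h' (h A) = A) /\
  (forall A1 A2 A3, #|A1| = m -> #|A2| = m -> #|A3| = m ->
     #|A1 :|: A2 :|: A3| <= m.+1 -> #|h A1 :|: h A2 :|: h A3| <= m.+1).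

Definition level_iso m h h' := level_hom m h h' /\ level_hom m h' h.

Lemma level_iso_sym m h h' : level_iso m h h' -> level_iso m h' h.
Proof. by case. Qed.

Lemma level_hom_card m h h' A : level_hom m h h' -> #|A| = m -> #|h A| = m.
Proof. by case=> H _ /H[]. Qed.

Lemma level_homK m h h' A : level_hom m h h' -> #|A| = m -> h' (h A) = A.
Proof. by case=> H _ /H[]. Qed.

Lemma level_hom_triple m h h' A1 A2 A3 : level_hom m h h' ->
  #|A1| = m -> #|A2| = m -> #|A3| = m ->
  #|A1 :|: A2 :|: A3| <= m.+1 -> #|h A1 :|: h A2 :|: h A3| <= m.+1.
Proof. by case=> _; apply. Qed.

Lemma setU1U1 (x y : T) C : (x |: C) :|: (y |: C) = x |: (y |: C).
Proof. by rewrite -setUA [C :|: _]setUC -setUA setUid. Qed.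

Lemma setU1_neq (x y : T) C : x \notin C -> y != x -> x |: C != y |: C.
Proof.
move=> xC yx; apply: contraNneq xC => eC.
by have := setU11 x C; rewrite eC !inE eq_sym (negbTE yx).
Qed.

Lemma subset_extend A m : #|A| <= m <= #|T| -> exists2 B : {set T}, A \subset B & #|B| = m.
Proof.
move=> /andP[Am mT]; have [d md] : exists d, m = #|A| + d by exists (m - #|A|); lia.
rewrite md in mT *; elim: d A {m Am md} mT => [|d IH] A AdT; first by exists A; rewrite ?addn0.
have : 0 < #|~: A| by rewrite cardsCs setCK; lia.
case/card_gt0P=> x; rewrite inE => xA.
have [B sB cB] := IH (x |: A) ltac:(by rewrite cardsU1 xA; lia).
by exists B; [apply: subset_trans sB; apply: subsetUr | rewrite cB cardsU1 xA; lia].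
Qed.

Lemma sunflower_kernel m X Y Z : #|X| = m.+1 -> #|Y| = m.+1 -> #|Z| = m.+1 ->
  #|X :&: Y| = m -> #|X :&: Z| = m -> #|Y :&: Z| = m ->
  m.+3 <= #|X :|: Y :|: Z| -> X :&: Y \subset Z.
Proof.
move=> cX cY cZ cXY cXZ cYZ cU; apply/idPn => nsub.
have small : #|X :&: Y :&: Z| < m.
  rewrite -cXY; apply: proper_card; rewrite properEneq subsetIl andbT.
  by apply: contraNneq nsub => <-; apply: subsetIr.
have eZ := cardsU (Z :&: X) (Z :&: Y).
rewrite -setIUr setIACA setIid [Z :&: X]setIC [Z :&: Y]setIC cXZ cYZ in eZ.
rewrite [Z :&: (X :&: Y)]setIC in eZ.
have sZ : Z \subset X :|: Y.
  have : Z :&: (X :|: Y) == Z by rewrite eqEcard subsetIl eZ cZ; lia.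
  by move/eqP <-; apply: subsetIr.
by move: cU; rewrite (setUidPl sZ) cardsU cX cY cXY; lia.
Qed.

Definition shadow (h : {set T} -> {set T}) C := \bigcap_(x | x \notin C) h (x |: C).

Lemma card_setU1 m x C : #|C| = m -> x \notin C -> #|x |: C| = m.+1.
Proof. by move=> cC xC; rewrite cardsU1 xC cC. Qed.

Lemma two_outside m C : m.+2 <= #|T| -> #|C| = m ->
  exists x y, [/\ x \notin C, y \notin C & x != y].
Proof.
move=> mT cC; have /card_gt1P[x [y [xC yC xy]]] : 1 < #|~: C|.
  by rewrite cardsCs in cC; lia.
by exists x, y; rewrite -!in_setC.
Qed.

Lemma shadow_sub h m C A : #|C| = m -> #|A| = m.+1 -> C \subset A ->
  shadow h C \subset h A.
Proof.
move=> cC cA CA.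
have /card_gt0P[x] : 0 < #|A :\: C| by rewrite cardsD (setIidPr CA); lia.
rewrite inE => /andP[xC xA].
suff -> : A = x |: C by apply: bigcap_inf.
by apply/esym/eqP; rewrite eqEcard subUset sub1set xA CA cardsU1 xC cC cA /=; lia.
Qed.

Section Shadow.
Variables (m : nat) (h h' : {set T} -> {set T}).
Hypotheses (hh' : level_iso m.+1 h h') (mT : m.+3 <= #|T|).

Let hom := hh'.1.
Let hom' := (level_iso_sym hh').1.

Lemma level_iso_meet X Y : #|X| = m.+1 -> #|Y| = m.+1 -> X != Y ->
  #|X :|: Y| <= m.+2 -> #|h X :&: h Y| = m.
Proof.
move=> cX cY XY cXY.
have hXY : #|h X :|: h Y| <= m.+2.
  by have := level_hom_triple hom cX cY cY; rewrite -!setUA !setUid; apply.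
have {}XY : h X != h Y.
  by apply: contra XY => /eqP e; rewrite -(level_homK hom cX) e (level_homK hom cY).
have := cardsU (h X) (h Y); rewrite (level_hom_card hom cX) (level_hom_card hom cY).
suff : #|h X :&: h Y| < m.+1 by lia.
rewrite -(level_hom_card hom cX); apply: proper_card; rewrite properEneq subsetIl andbT.
apply: contra XY => /eqP/setIidPl sXY.
by rewrite eqEcard sXY (level_hom_card hom cX) (level_hom_card hom cY) /=.
Qed.

Lemma level_iso_sunflower C x y z : #|C| = m ->
  x \notin C -> y \notin C -> z \notin C -> x != y -> x != z -> y != z ->
  h (x |: C) :&: h (y |: C) \subset h (z |: C).
Proof.
move=> cC xC yC zC xy xz yz.
have cX := card_setU1 cC xC; have cY := card_setU1 cC yC; have cZ := card_setU1 cC zC.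
have meet a b : a \notin C -> b \notin C -> a != b ->
    #|h (a |: C) :&: h (b |: C)| = m.
  move=> aC bC ab; apply: level_iso_meet; rewrite ?(card_setU1 cC) ?setU1_neq 1?eq_sym //.
  by rewrite setU1U1 cardsU1 cardsU1 cC; lia.
apply: (sunflower_kernel (m := m)); rewrite ?(level_hom_card hom) ?meet //.
rewrite ltnNge; apply/negP.
have hcard := level_hom_card hom.
move=> /(level_hom_triple hom' (hcard _ cX) (hcard _ cY) (hcard _ cZ)).
rewrite !(level_homK hom) //.
rewrite setU1U1 -setUA setU1U1 !cardsU1 !inE cC.
by rewrite (negbTE xC) (negbTE yC) (negbTE zC) (negbTE xy) (negbTE xz) (negbTE yz) /=; lia.
Qed.

Lemma shadow_pair C x y : #|C| = m -> x \notin C -> y \notin C -> x != y ->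
  shadow h C = h (x |: C) :&: h (y |: C).
Proof.
move=> cC xC yC xy; apply/eqP; rewrite eqEsubset subsetI !bigcap_inf //=.
apply/bigcapsP => z zC.
have [->|zx] := eqVneq z x; first exact: subsetIl.
have [->|zy] := eqVneq z y; first exact: subsetIr.
by apply: level_iso_sunflower; rewrite // eq_sym.
Qed.

Lemma shadow_card C : #|C| = m -> #|shadow h C| = m.
Proof.
move=> cC; have [x [y [xC yC xy]]] := two_outside (ltnW mT) cC.
rewrite (shadow_pair cC xC yC xy); apply: level_iso_meet.
- exact: card_setU1.
- exact: card_setU1.
- by rewrite setU1_neq // eq_sym.
by rewrite setU1U1 !cardsU1 cC; lia.
Qed.

End Shadow.

Lemma shadowK m h h' C : level_iso m.+1 h h' -> m.+3 <= #|T| -> #|C| = m ->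
  shadow h' (shadow h C) = C.
Proof.
move=> hh' mT cC; have hom := hh'.1.
have [x [y [xC yC xy]]] := two_outside (ltnW mT) cC.
have [cX cY] := (card_setU1 cC xC, card_setU1 cC yC).
have csh := shadow_card hh' mT cC.
have ext X : #|X| = m.+1 -> C \subset X ->
    exists2 u, u \notin shadow h C & h X = u |: shadow h C.
  move=> cX' CX; have sX := shadow_sub h cC cX' CX.
  have /card_gt0P[u] : 0 < #|h X :\: shadow h C|.
    by rewrite cardsD (setIidPr sX) (level_hom_card hom cX') csh; lia.
  rewrite inE => /andP[uC uX]; exists u => //; apply/esym/eqP.
  by rewrite eqEcard subUset sub1set uX sX cardsU1 uC csh (level_hom_card hom cX') /=.
have [u uC eu] := ext _ cX (subsetUr _ _).
have [v vC ev] := ext _ cY (subsetUr _ _).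
have uv : u != v.
  apply: contra xy => /eqP euv; rewrite -euv -eu in ev.
  have := setU11 x C; rewrite -(level_homK hom cX) -ev (level_homK hom cY) !inE.
  by rewrite (negbTE xC) orbF.
rewrite (shadow_pair (level_iso_sym hh') mT csh uC vC uv) -eu -ev.
rewrite (level_homK hom cX) (level_homK hom cY) -setUIl.
suff -> : [set x] :&: [set y] = set0 by rewrite set0U.
by apply/setP => i; rewrite !inE; apply: contraNF xy => /andP[/eqP <- /eqP <-].
Qed.

Lemma shadow_triple m (h : {set T} -> {set T}) C1 C2 C3 : #|C1| = m -> #|C2| = m -> #|C3| = m ->
  (forall A, #|A| = m.+1 -> #|h A| = m.+1) -> m.+1 <= #|T| ->
  #|C1 :|: C2 :|: C3| <= m.+1 -> #|shadow h C1 :|: shadow h C2 :|: shadow h C3| <= m.+1.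
Proof.
move=> c1 c2 c3 hcard mT cU.
have [A sA cA] := @subset_extend (C1 :|: C2 :|: C3) m.+1 ltac:(lia).
move: sA; rewrite !subUset => /andP[/andP[s1 s2] s3].
rewrite -(hcard A cA); apply: subset_leq_card.
by rewrite !subUset !(shadow_sub h _ cA).
Qed.

Lemma level_iso_shadow m h h' : level_iso m.+1 h h' -> m.+3 <= #|T| ->
  level_iso m (shadow h) (shadow h').
Proof.
move=> hh' mT; have h'h := level_iso_sym hh'.
have sh g g' : level_iso m.+1 g g' -> level_hom m (shadow g) (shadow g').
  move=> gg'; split=> [C cC|C1 C2 C3 c1 c2 c3].
    by rewrite (shadow_card gg' mT cC) (shadowK gg' mT cC).
  by apply: shadow_triple => // [A|]; [apply: (level_hom_card gg'.1) | lia].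
by split; apply: sh.
Qed.

Lemma level_iso_perm m h h' : 0 < m -> m.+2 <= #|T| -> level_iso m h h' ->
  exists s : {perm T}, forall A, #|A| = m -> h A = s @: A.
Proof.
elim: m h h' => [//|[|m] IH] h h' _ mT hh'.
  have hom := hh'.1.
  have h1 i : exists j, h [set i] == [set j].
    have /cards1P[j ->] : #|h [set i]| == 1 by rewrite (level_hom_card hom) ?cards1.
    by exists j.
  pose f i := xchoose (h1 i).
  have hf i : h [set i] = [set f i] by apply/eqP/(xchooseP (h1 i)).
  have finj : injective f.
    move=> i j fij; apply/set1P.
    by rewrite -(level_homK hom (cards1 j)) hf -fij -hf (level_homK hom) ?cards1 ?set11.
  by exists (perm finj) => A /eqP/cards1P[i ->]; rewrite imset_set1 permE hf.
have [s Hs] := IH _ _ isT (ltnW mT) (level_iso_shadow hh' mT).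
exists s => A cA; have hom := hh'.1.
apply/eqP; rewrite eq_sym eqEcard card_imset; last exact: perm_inj.
rewrite cA (level_hom_card hom cA) leqnn andbT.
apply/subsetP => _ /imsetP[b bA ->].
have [a aA ab] : exists2 a, a \in A & a != b.
  have /card_gt1P[x [y [xA yA xy]]] : 1 < #|A| by rewrite cA.
  by have [xb|] := eqVneq x b; [exists y; rewrite // -xb eq_sym | exists x].
have cAa : #|A :\ a| = m.+1 by move: cA; rewrite (cardsD1 a) aA; lia.
have /subsetP := shadow_sub h cAa cA (subsetDl _ _); apply.
by rewrite Hs // mem_imset ?inE 1?eq_sym ?ab //; apply: perm_inj.
Qed.
End LevelIso.

Section PermSets.
Variable T : finType.
Implicit Types A B : {set T}.

Lemma imset_permK (s : {perm T}) A : s^-1%g @: (s @: A) = A.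
Proof. by rewrite -imset_comp (eq_imset _ (permK s)) imset_id. Qed.

Lemma imset_perm_subset (s : {perm T}) A B : (s @: A \subset s @: B) = (A \subset B).
Proof.
apply/idP/idP => [|]; last exact: imsetS.
by move/(imsetS s^-1%g); rewrite !imset_permK.
Qed.

Lemma imset_perm_fixed (s : {perm T}) A : {in A, forall x, s x = x} -> s @: A = A.
Proof. by move=> sA; rewrite -[RHS]imset_id; apply: eq_in_imset. Qed.

Lemma perm_fixed_last (s : {perm T}) y : (forall x, x != y -> s x = x) -> s y = y.
Proof.
move=> sx; have [Vy|Vy] := eqVneq (s^-1%g y) y.
  by move/(congr1 s): Vy; rewrite permKV.
by move: (sx _ Vy); rewrite permKV => yV; rewrite -yV eqxx in Vy.
Qed.
End PermSets.

Section BlockStabilizer.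
Variables (T : finType) (F : pred {set T}).
Implicit Types B U : {set T}.

Lemma perm_blocks_stable k (s : {perm T}) : (forall B, F B -> #|B| = k) ->
  (forall B, #|B| = k -> F (s @: B) = F B) -> forall B, F (s @: B) = F B.
Proof.
move=> Fk sF B; have [/sF //|Bk] := eqVneq #|B| k.
have cs : #|s @: B| = #|B| by apply/card_imset/perm_inj.
by apply/idP/idP => /Fk; rewrite ?cs => /eqP; rewrite (negbTE Bk).
Qed.

Definition rigid_family := forall s : {perm T}, (forall B, F (s @: B) = F B) -> s = 1%g.

Variable s : {perm T}.
Hypothesis sF : forall B, F (s @: B) = F B.

Lemma perm_blocks_stableV B : F (s^-1%g @: B) = F B.
Proof. by rewrite -sF -imset_comp (eq_imset _ (permKV s)) imset_id. Qed.

Lemma mem_imset_perm x B : (s x \in s @: B) = (x \in B).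
Proof. exact/mem_imset/perm_inj. Qed.

(* If s moved x to y, the image of a block inside x |: U would be a block in
   which y is the only point outside U. *)
Lemma perm_fixed_next U x : s @: U = U -> x \notin U ->
  (exists B, [/\ F B, x \in B & B \subset x |: U]) ->
  (forall y B, y \notin U -> y != x -> F B -> y \in B ->
      exists z, [/\ z \in B, z != y & z \notin U]) -> s x = x.
Proof.
move=> sU xU [B [FB xB BxU]] other; apply/eqP/negPn/negP => sxx.
have sxU : s x \notin U by rewrite -sU mem_imset_perm.
have sFB : F (s @: B) by rewrite sF.
have [z [zB zx zU]] := other _ _ sxU sxx sFB (imset_f s xB).
have /subsetP/(_ z zB) : s @: B \subset s @: (x |: U) by apply: imsetS.
by rewrite imsetU1 sU !inE (negbTE zx) (negbTE zU).
Qed.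

Definition unique_block y := forall B1 B2, F B1 -> F B2 -> y \in B1 -> y \in B2 -> B1 = B2.

Definition triple_block y := exists B1 B2 B3, [/\ F B1, F B2, F B3,
   [/\ y \in B1, y \in B2 & y \in B3] & [/\ B1 != B2, B1 != B3 & B2 != B3]].

Lemma unique_block_perm y : unique_block y -> unique_block (s y).
Proof.
move=> uy B1 B2 F1 F2 y1 y2.
have memV B : s y \in B -> y \in s^-1%g @: B.
  by move=> yB; rewrite -(permK s y) mem_imset //; apply: perm_inj.
apply: (imset_inj (@perm_inj _ s^-1%g)).
by apply: uy (memV _ y1) (memV _ y2); rewrite perm_blocks_stableV.
Qed.

Lemma triple_block_perm y : triple_block y -> triple_block (s y).
Proof.
move=> [B1 [B2 [B3 [F1 F2 F3 [y1 y2 y3] [d12 d13 d23]]]]].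
have inj := imset_inj (@perm_inj _ s).
exists (s @: B1), (s @: B2), (s @: B3); split; rewrite ?sF ?mem_imset_perm //.
by split; [move: d12 | move: d13 | move: d23]; apply: contra => /eqP/inj ->.
Qed.
End BlockStabilizer.

Section Intervals.
Variable n : nat.
Local Notation N := n.+1.
Local Notation T := 'I_N.
Implicit Types A B U E : {set T}.

Definition itv j l : {set T} := [set i : T | j <= i < j + l].
Definition up_set x : {set T} := [set i : T | x < i].

Lemma eq_inord (i : T) m : m < N -> (i == inord m) = (i == m :> nat).
Proof. by move=> hm; rewrite -val_eqE /= inordK. Qed.

Lemma card_itv j l : j + l <= N -> #|itv j l| = l.
Proof.
elim: l => [|l IH] hl.
  by apply/eqP; rewrite cards_eq0; apply/eqP/setP=> i; rewrite !inE addn0; lia.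
have -> : itv j l.+1 = inord (j + l) |: itv j l.
  by apply/setP=> i; rewrite !inE eq_inord; lia.
by rewrite cardsU1 IH ?inE ?inordK; lia.
Qed.

Lemma perm_fixed_up (s : {perm T}) a b : b <= N ->
  (forall x, a <= x < b -> s @: itv 0 x = itv 0 x -> s (inord x) = inord x) ->
  s @: itv 0 a = itv 0 a -> forall x, a <= x < b -> s (inord x) = inord x.
Proof.
move=> bN step sa.
have stable d : a + d <= b -> s @: itv 0 (a + d) = itv 0 (a + d).
  elim: d => [|d IH] hd; first by rewrite addn0.
  have -> : itv 0 (a + d.+1) = inord (a + d) |: itv 0 (a + d).
    by apply/setP=> i; rewrite !inE eq_inord; lia.
  by rewrite imsetU1 IH ?step ?IH //; lia.
move=> x hx; apply: step => //.
by have := stable (x - a); rewrite subnKC; [apply; lia | lia].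
Qed.

Lemma perm_fixed_down (s : {perm T}) a b : b < N ->
  (forall x, a <= x <= b -> s @: up_set x = up_set x -> s (inord x) = inord x) ->
  s @: up_set b = up_set b -> forall x, a <= x <= b -> s (inord x) = inord x.
Proof.
move=> bN step sb.
have stable d : d <= b - a -> s @: up_set (b - d) = up_set (b - d).
  elim: d => [|d IH] hd; first by rewrite subn0.
  have -> : up_set (b - d.+1) = inord (b - d) |: up_set (b - d).
    by apply/setP=> i; rewrite !inE eq_inord; lia.
  by rewrite imsetU1 IH ?step ?IH //; lia.
move=> x hx; apply: step => //.
by have := stable (b - x); rewrite subKn; [apply; lia | lia].
Qed.

Definition interval_blocks k (E B : {set T}) :=
  [exists j : T, (j + k <= N) && (B == itv j k)] || (B == E).

Lemma interval_blocks_itv k E j : 0 < k -> j + k <= N -> interval_blocks k E (itv j k).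
Proof.
move=> k0 jk; apply/orP; left; apply/existsP; exists (inord j).
by rewrite inordK ?jk ?eqxx //; lia.
Qed.

Lemma interval_blocks_E k E : interval_blocks k E E.
Proof. by rewrite /interval_blocks eqxx orbT. Qed.

Lemma interval_blocksP k E B : interval_blocks k E B ->
  (exists2 j, j + k <= N & B = itv j k) \/ B = E.
Proof.
by case/orP => [/existsP[j /andP[jk /eqP ->]] | /eqP ->]; [left; exists j | right].
Qed.

Lemma card_interval_blocks k E : #|E| = k -> forall B, interval_blocks k E B -> #|B| = k.
Proof. by move=> cE B /interval_blocksP[[j jk ->]|->] //; rewrite card_itv. Qed.
End Intervals.

Section LongBlocks.
Variables (n k : nat).
Hypotheses (k3 : 3 <= k) (kN : (2 * k).+1 <= n.+1).
Local Notation N := n.+1.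
Local Notation T := 'I_N.
Implicit Types B : {set T}.

(* The extra block {k} :|: [N-k+1, N) makes 0 the only point lying in a
   single block. *)
Definition long_block : {set T} := itv n k 1 :|: itv n (N - k + 1) (k - 1).
Local Notation S := (interval_blocks k long_block).

Lemma mem_long_block (i : T) : (i \in long_block) = (i == k :> nat) || (N - k + 1 <= i).
Proof. by rewrite !inE; have := ltn_ord i; lia. Qed.

Lemma card_long_block : #|long_block| = k.
Proof.
rewrite cardsU !card_itv; [|lia|lia].
suff -> : itv n k 1 :&: itv n (N - k + 1) (k - 1) = set0 by rewrite cards0; lia.
by apply/setP=> i; rewrite !inE; lia.
Qed.

Lemma long_block_at0 B : S B -> inord 0 \in B -> B = itv n 0 k.
Proof.
case/interval_blocksP => [[j jk ->]|->]; rewrite ?mem_long_block ?inE inordK //; last lia.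
by move=> j0; have -> : j = 0 by lia.
Qed.

Lemma long_unique_block (y : T) : unique_block S y -> y = inord 0.
Proof.
move=> uy; apply/eqP/negPn/negP; rewrite eq_inord // => y0.
have k0 : 0 < k by lia.
have SI j : j + k <= N -> S (itv n j k) by apply: interval_blocks_itv.
have split2 j j' z : j + k <= N -> j' + k <= N -> y \in itv n j k -> y \in itv n j' k ->
    (inord z \in itv n j k) != (inord z \in itv n j' k) -> False.
  by move=> jk j'k yj yj'; rewrite (uy _ _ (SI _ jk) (SI _ j'k) yj yj') eqxx.
have := ltn_ord y; case: (leqP y (N - k)) => y1 yN.
  by apply: (split2 y.-1 y y.-1); rewrite ?inE ?inordK; lia.
case: (leqP y (N - 2)) => y2.
  by apply: (split2 (N - k - 1) (N - k) (N - k - 1)); rewrite ?inE ?inordK; lia.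
have := uy _ _ (SI (N - k) ltac:(lia)) (interval_blocks_E k long_block).
move=> /(_ ltac:(rewrite inE; lia) ltac:(rewrite mem_long_block; lia)) /setP /(_ (inord k)).
by rewrite mem_long_block !inE inordK; lia.
Qed.

Section Stabilizer.
Variable s : {perm T}.
Hypothesis sS : forall B, S (s @: B) = S B.

Lemma long_step_up x : k <= x < N -> s @: itv n 0 x = itv n 0 x -> s (inord x) = inord x.
Proof.
move=> hx sU; have k0 : 0 < k by lia.
apply: (perm_fixed_next sS sU); first by rewrite inE inordK; lia.
  exists (itv n (x.+1 - k) k); split; first by apply: interval_blocks_itv; lia.
    by rewrite inE inordK; lia.
  by apply/subsetP => i; rewrite !inE eq_inord; lia.
move=> y B; rewrite inE eq_inord; last lia.
move=> yU yx SB yB; have := ltn_ord y.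
case/interval_blocksP: SB yB => [[j jk ->]|->].
  rewrite inE => yB; case: (ltnP j y) => jy.
    by exists (inord y.-1); split; rewrite ?inE -?val_eqE /= ?inordK; lia.
  by exists (inord y.+1); split; rewrite ?inE -?val_eqE /= ?inordK; lia.
rewrite mem_long_block => yE; have [yN|yN] := eqVneq (nat_of_ord y) (N - 1).
  by exists (inord (N - 2)); split; rewrite ?mem_long_block ?inE -?val_eqE /= ?inordK; lia.
by exists (inord (N - 1)); split; rewrite ?mem_long_block ?inE -?val_eqE /= ?inordK; lia.
Qed.

Lemma long_step_down x : 1 <= x <= k.-1 -> s @: up_set n x = up_set n x ->
  s (inord x) = inord x.
Proof.
move=> hx sU; have k0 : 0 < k by lia.
apply: (perm_fixed_next sS sU); first by rewrite inE inordK; lia.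
  exists (itv n x k); split; first by apply: interval_blocks_itv; lia.
    by rewrite inE inordK; lia.
  by apply/subsetP => i; rewrite !inE eq_inord; lia.
move=> y B; rewrite inE eq_inord; last lia.
move=> yU yx SB yB; have := ltn_ord y.
case/interval_blocksP: SB yB => [[j jk ->]|->].
  rewrite inE => yB; case: (ltnP j y) => jy.
    by exists (inord y.-1); split; rewrite ?inE -?val_eqE /= ?inordK; lia.
  by exists (inord y.+1); split; rewrite ?inE -?val_eqE /= ?inordK; lia.
by rewrite mem_long_block; lia.
Qed.

Lemma long_blocks_rigid : s = 1%g.
Proof.
have k0 : 0 < k by lia.
have s0 : s (inord 0) = inord 0.
  apply: long_unique_block; apply: unique_block_perm => // B1 B2 S1 S2.
  by move=> /long_block_at0-> // /long_block_at0->.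
have s_low : s @: itv n 0 k = itv n 0 k.
  apply: long_block_at0; first by rewrite sS; apply: interval_blocks_itv; lia.
  by rewrite -s0 mem_imset_perm inE inordK; lia.
have fix_up := perm_fixed_up (leqnn N) long_step_up s_low.
have s_up : s @: up_set n k.-1 = up_set n k.-1.
  apply: imset_perm_fixed => i; rewrite inE => ki.
  by rewrite -[i]inord_val fix_up ?inord_val //; have := ltn_ord i; lia.
have kN1 : k.-1 < N by lia.
have fix_down := perm_fixed_down (a := 1) kN1 long_step_down s_up.
apply/permP => i; rewrite perm1 -[i]inord_val; have := ltn_ord i.
case: (posnP i) => [->|i0] iN; first exact: s0.
by case: (ltnP i k) => ik; [apply: fix_down | apply: fix_up]; lia.
Qed.
End Stabilizer.
End LongBlocks.

Section ShortBlocks.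
Variable n : nat.
Hypothesis N6 : 6 <= n.+1.
Local Notation N := n.+1.
Local Notation T := 'I_N.
Implicit Types B : {set T}.

(* For k = 2 the blocks are the edges of the path 0 - 1 - ... - (N-1) plus
   the chord {1, 3}; the two tails at 0 and at 3 have different lengths. *)
Definition short_block : {set T} := itv n 1 1 :|: itv n 3 1.
Local Notation S := (interval_blocks 2 short_block).

Lemma mem_short_block (i : T) : (i \in short_block) = (i == 1 :> nat) || (i == 3 :> nat).
Proof. by rewrite !inE; lia. Qed.

Lemma card_short_block : #|short_block| = 2.
Proof.
rewrite cardsU !card_itv; [|lia|lia].
suff -> : itv n 1 1 :&: itv n 3 1 = set0 by rewrite cards0.
by apply/setP=> i; rewrite !inE; lia.
Qed.

Lemma short_itv j : j + 2 <= N -> S (itv n j 2).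
Proof. exact: interval_blocks_itv. Qed.

Lemma short_block_at0 B : S B -> inord 0 \in B -> B = itv n 0 2.
Proof.
case/interval_blocksP => [[j jk ->]|->]; rewrite ?mem_short_block ?inE inordK //; try lia.
by move=> j0; have -> : j = 0 by lia.
Qed.

Lemma short_block_atN B : S B -> inord (N - 1) \in B -> B = itv n (N - 2) 2.
Proof.
case/interval_blocksP => [[j jk ->]|->]; rewrite ?mem_short_block ?inE inordK //; try lia.
by move=> jN; have -> : j = N - 2 by lia.
Qed.

Lemma short_unique_block (y : T) : unique_block S y ->
  (y == 0 :> nat) || (y == N - 1 :> nat).
Proof.
move=> uy; have yN := ltn_ord y; apply/negPn/negP => y0N.
have yl : y \in itv n y.-1 2 by rewrite inE; lia.
have yr : y \in itv n y 2 by rewrite inE; lia.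
move/setP: (uy _ _ (short_itv (j := y.-1) ltac:(lia)) (short_itv (j := y) ltac:(lia)) yl yr).
by move=> /(_ (inord y.-1)); rewrite !inE inordK; lia.
Qed.

Lemma short_triple_block1 : triple_block S (inord 1).
Proof.
exists (itv n 0 2), (itv n 1 2), short_block; split.
- by apply: short_itv; lia.
- by apply: short_itv; lia.
- exact: interval_blocks_E.
- by split; rewrite ?mem_short_block ?inE inordK //; lia.
split.
- by apply/negP => /eqP/setP/(_ (inord 0)); rewrite !inE inordK; lia.
- by apply/negP => /eqP/setP/(_ (inord 0)); rewrite mem_short_block !inE inordK; lia.
- by apply/negP => /eqP/setP/(_ (inord 2)); rewrite mem_short_block !inE inordK; lia.
Qed.

Lemma short_not_triple_block : ~ triple_block S (inord (N - 2)).
Proof.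
move=> [B1 [B2 [B3 [S1 S2 S3 [y1 y2 y3] [d12 d13 d23]]]]].
have two B : S B -> inord (N - 2) \in B -> B = itv n (N - 3) 2 \/ B = itv n (N - 2) 2.
  case/interval_blocksP => [[j jk ->]|->]; rewrite ?mem_short_block ?inE inordK; try lia.
  by move=> jN; case: (ltnP j (N - 2)) => jN2; [left|right]; congr itv; lia.
move: d12 d13 d23.
by case: (two _ S1 y1) => ->; case: (two _ S2 y2) => ->; case: (two _ S3 y3) => ->;
  rewrite ?eqxx.
Qed.

Section Stabilizer.
Variable s : {perm T}.
Hypothesis sS : forall B, S (s @: B) = S B.

Lemma short_step_down x : 3 <= x <= N - 2 -> s @: up_set n x = up_set n x ->
  s (inord x) = inord x.
Proof.
move=> hx sU.
apply: (perm_fixed_next sS sU); first by rewrite inE inordK; lia.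
  exists (itv n x 2); split; first by apply: short_itv; lia.
    by rewrite inE inordK; lia.
  by apply/subsetP => i; rewrite !inE eq_inord; lia.
move=> y B; rewrite inE eq_inord; last lia.
move=> yU yx SB yB; have := ltn_ord y.
case/interval_blocksP: SB yB => [[j jk ->]|->].
  rewrite inE => yB; case: (ltnP j y) => jy.
    by exists (inord y.-1); split; rewrite ?inE -?val_eqE /= ?inordK; lia.
  by exists (inord y.+1); split; rewrite ?inE -?val_eqE /= ?inordK; lia.
rewrite mem_short_block => yE; have [y1|y1] := eqVneq (nat_of_ord y) 1.
  by exists (inord 3); split; rewrite ?mem_short_block ?inE -?val_eqE /= ?inordK; lia.
by exists (inord 1); split; rewrite ?mem_short_block ?inE -?val_eqE /= ?inordK; lia.
Qed.

Lemma short_fixed0 : s (inord 0) = inord 0.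
Proof.
have u0 : unique_block S (inord 0).
  by move=> B1 B2 S1 S2 /short_block_at0-> // /short_block_at0->.
have /orP[/eqP s0|/eqP s0] := short_unique_block (unique_block_perm sS u0).
  by apply/val_inj; rewrite /= s0 inordK; lia.
exfalso; apply: short_not_triple_block.
have sI : s @: itv n 0 2 = itv n (N - 2) 2.
  apply: short_block_atN; first by rewrite sS; apply: short_itv; lia.
  have -> : inord (N - 1) = s (inord 0) by apply/val_inj; rewrite /= s0 inordK; lia.
  by rewrite mem_imset_perm inE inordK; lia.
have s1 : s (inord 1) \in itv n (N - 2) 2 by rewrite -sI mem_imset_perm inE inordK; lia.
have s10 : s (inord 1) != s (inord 0).
  by rewrite (inj_eq perm_inj) -val_eqE /= !inordK; lia.
have -> : inord (N - 2) = s (inord 1).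
  by apply/val_inj; move: s1 s10; rewrite inE -val_eqE /= s0 inordK; lia.
exact (triple_block_perm sS short_triple_block1).
Qed.

Lemma short_fixedN : s (inord (N - 1)) = inord (N - 1).
Proof.
have uN : unique_block S (inord (N - 1)).
  by move=> B1 B2 S1 S2 /short_block_atN-> // /short_block_atN->.
have /orP[/eqP sN|/eqP sN] := short_unique_block (unique_block_perm sS uN).
  have : s (inord (N - 1)) != s (inord 0).
    by rewrite (inj_eq perm_inj) -val_eqE /= !inordK; lia.
  by rewrite short_fixed0 -val_eqE /= sN inordK; lia.
by apply/val_inj; rewrite /= sN inordK; lia.
Qed.

Lemma short_blocks_rigid : s = 1%g.
Proof.
have s0 := short_fixed0.
have s1 : s (inord 1) = inord 1.
  have sI : s @: itv n 0 2 = itv n 0 2.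
    apply: short_block_at0; first by rewrite sS; apply: short_itv; lia.
    by rewrite -s0 mem_imset_perm inE inordK; lia.
  have : s (inord 1) \in itv n 0 2 by rewrite -sI mem_imset_perm inE inordK; lia.
  have : s (inord 1) != inord 0 by rewrite -s0 (inj_eq perm_inj) -val_eqE /= !inordK; lia.
  by move=> s10 s1I; apply/val_inj; move: s10 s1I; rewrite inE -val_eqE /= !inordK; lia.
have s_up : s @: up_set n (N - 2) = up_set n (N - 2).
  have -> : up_set n (N - 2) = [set inord (N - 1)].
    by apply/setP => i; rewrite !inE eq_inord; have := ltn_ord i; lia.
  by rewrite imset_set1 short_fixedN.
have N2 : N - 2 < N by lia.
have fix_down := perm_fixed_down (a := 3) N2 short_step_down s_up.
have fix_but2 i : i != inord 2 -> s i = i.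
  have := ltn_ord i; rewrite eq_inord; last lia; move=> iN i2; rewrite -[i]inord_val.
  have [i01|i3] : nat_of_ord i <= 1 \/ 3 <= i by lia.
    by have [-> | ->] : nat_of_ord i = 0 \/ nat_of_ord i = 1 by lia.
  have [iN1|iN1] := eqVneq (nat_of_ord i) (N - 1); first by rewrite iN1 short_fixedN.
  by apply: fix_down; lia.
apply/permP => i; rewrite perm1.
by have [->|] := eqVneq i (inord 2); [apply: perm_fixed_last | apply: fix_but2].
Qed.
End Stabilizer.
End ShortBlocks.

Section LineGraph.
Variables n k : nat.
Hypothesis k0 : 0 < k.
Local Notation N := n.+1.
Local Notation V := (LGvert N k).
Local Notation adj := (@LGadj N k).
Implicit Types (A B : {set 'I_N}) (u v w : V).

Lemma card_vertex v : #|val v| = k.-1 \/ #|val v| = k.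
Proof. by case/orP: (valP v) => /eqP ->; [left|right]. Qed.

Definition lower_vertex A (cA : #|A| = k.-1) : V :=
  exist _ A (introT orP (or_introl (introT eqP cA))).
Definition upper_vertex A (cA : #|A| = k) : V :=
  exist _ A (introT orP (or_intror (introT eqP cA))).

Lemma lower_vertexE A (cA : #|A| = k.-1) : val (lower_vertex cA) = A. Proof. by []. Qed.
Lemma upper_vertexE A (cA : #|A| = k) : val (upper_vertex cA) = A. Proof. by []. Qed.

Lemma LGadj_lower u w : #|val u| = k.-1 ->
  adj u w = (#|val w| == k) && (val u \subset val w).
Proof.
move=> cu; have kk : (k.-1 == k) = false by lia.
by rewrite /LGadj cu eqxx kk andbF orbF.
Qed.

Lemma LGadjC u w : adj u w = adj w u.
Proof. by rewrite /LGadj orbC. Qed.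

Definition perm_vertex_fun (s : {perm 'I_N}) v : V :=
  exist _ (s @: val v) (etrans (congr1 (fun m => (m == k.-1) || (m == k))
                                   (card_imset _ (@perm_inj _ s))) (valP v)).

Lemma perm_vertex_fun_inj s : injective (perm_vertex_fun s).
Proof. by move=> u v /(congr1 val)/(imset_inj (@perm_inj _ s))/val_inj. Qed.

Definition perm_vertex s : {perm V} := perm (@perm_vertex_fun_inj s).

Lemma perm_vertexE s v : val (perm_vertex s v) = s @: val v.
Proof. by rewrite permE. Qed.

Lemma perm_vertex_aut s : graph_aut adj (perm_vertex s).
Proof.
move=> u v; rewrite /LGadj !perm_vertexE !card_imset ?imset_perm_subset //; exact: perm_inj.
Qed.

Lemma tperm_common_neighbour (a b : 'I_N) v : a \in val v -> b \notin val v ->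
  exists w, adj v w /\ adj (perm_vertex (tperm a b) v) w.
Proof.
move=> av bv; have ab : a != b by apply: contraNneq bv => <-.
have cT : #|tperm a b @: val v| = #|val v| by apply/card_imset/perm_inj.
case: (card_vertex v) => cv.
- have cw : #|b |: val v| = k by rewrite cardsU1 bv cv; lia.
  exists (upper_vertex cw); rewrite !LGadj_lower ?perm_vertexE ?cT //.
  rewrite upper_vertexE cw eqxx subsetUr.
  split=> //; apply/subsetP => _ /imsetP[x xv ->]; rewrite !inE.
  case: tpermP => [_|xb|_ _]; rewrite ?eqxx ?xv ?orbT //.
  by move: xv; rewrite xb (negbTE bv).
- have cw : #|val v :\ a| = k.-1.
    by move: (val v) av cv => A aA; rewrite (cardsD1 a A) aA add1n => <-.
  exists (lower_vertex cw); rewrite ![adj _ (lower_vertex _)]LGadjC.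
  rewrite !LGadj_lower ?perm_vertexE // !lower_vertexE cT cv eqxx subsetDl.
  split=> //.
  apply/subsetP => x; rewrite !inE => /andP[xa xv].
  have xb : x != b by apply: contraNneq bv => <-.
  have tx : tperm a b x = x by apply: tpermD; rewrite eq_sym.
  by rewrite -tx mem_imset //; apply: perm_inj.
Qed.

Lemma perm_vertex_tperm_fixed (a b : 'I_N) v : (a \in val v) = (b \in val v) ->
  perm_vertex (tperm a b) v = v.
Proof.
move=> abv; apply/val_inj/eqP; rewrite perm_vertexE eqEcard card_imset ?leqnn ?andbT;
  last exact: perm_inj.
apply/subsetP => _ /imsetP[x xv ->].
case: tpermP => [xa|xb|//]; first by rewrite -abv -xa.
by rewrite abv -xb.
Qed.

Lemma distinguishing_ge3 m (c : V -> 'I_m) : 1 < k < N ->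
  proper_col adj c -> distinguishing adj c -> 3 <= m.
Proof.
move=> kn pc dc; rewrite leqNgt; apply/negP; rewrite ltnS => m2.
have two_colors (x y z : 'I_m) : x != y -> z != y -> z = x.
  by move: x y z m2 => [x ?] [y ?] [z ?] m2; rewrite -!val_eqE /= => *; apply/val_inj => /=; lia.
pose t := tperm (ord0 : 'I_N) ord_max.
have ct v : c (perm_vertex t v) = c v.
  have [|] := eqVneq (ord0 \in val v) (ord_max \in val v).
    by move/perm_vertex_tperm_fixed ->.
  case: (boolP (ord0 \in val v)) => pv; case: (boolP (ord_max \in val v)) => qv //= _.
  - have [w [vw tvw]] := tperm_common_neighbour pv qv.
    exact: two_colors (pc _ _ vw) (pc _ _ tvw).
  - have [w [vw tvw]] := tperm_common_neighbour qv pv.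
    by rewrite /t tpermC; exact: two_colors (pc _ _ vw) (pc _ _ tvw).
have c0 : #|itv n 0 k.-1| = k.-1 by rewrite card_itv; lia.
have /(congr1 (fun f : {perm V} => val (f (lower_vertex c0)))) := dc _ (perm_vertex_aut t) ct.
rewrite perm1 perm_vertexE /= => /setP /(_ ord_max).
rewrite -[ord_max in LHS](tpermL (ord0 : 'I_N)) mem_imset_perm.
by rewrite !inE /=; lia.
Qed.

Definition vertex_map (f : {perm V}) A : {set 'I_N} := oapp (fun v => val (f v)) A (insub A).

Lemma vertex_mapE f v : vertex_map f (val v) = val (f v).
Proof. by rewrite /vertex_map valK. Qed.

Lemma level_hom_aut (f g : {perm V}) : k <= N -> graph_aut adj f ->
  (forall v, #|val (f v)| = #|val v|) -> (forall v, g (f v) = v) ->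
  level_hom k.-1 (vertex_map f) (vertex_map g).
Proof.
move=> kN fa fc gf; split=> [A cA|A1 A2 A3 c1 c2 c3 cU].
  by rewrite -(lower_vertexE cA) !vertex_mapE fc gf.
have [B sB cB] := @subset_extend _ (A1 :|: A2 :|: A3) k ltac:(rewrite card_ord; lia).
move: sB; rewrite !subUset => /andP[/andP[s1 s2] s3].
have sub A (cA : #|A| = k.-1) : A \subset B -> vertex_map f A \subset val (f (upper_vertex cB)).
  move=> AB; have : adj (lower_vertex cA) (upper_vertex cB) by rewrite LGadj_lower //= cB eqxx.
  have -> : vertex_map f A = val (f (lower_vertex cA)) by exact: vertex_mapE (lower_vertex cA).
  by rewrite -fa LGadj_lower ?fc // => /andP[].
apply: leq_trans (_ : #|val (f (upper_vertex cB))| <= _).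
  by apply: subset_leq_card; rewrite !subUset !sub.
by rewrite fc upper_vertexE cB prednK.
Qed.

Lemma LGaut_perm (f : {perm V}) : 1 < k < N -> graph_aut adj f ->
  (forall v, #|val (f v)| = #|val v|) ->
  exists s : {perm 'I_N}, forall v, val (f v) = s @: val v.
Proof.
move=> kN fa fc.
have fa' : graph_aut adj f^-1%g by move=> x y; rewrite -fa !permKV.
have fc' v : #|val (f^-1%g v)| = #|val v| by rewrite -{2}(permKV f v) fc.
have iso : level_iso k.-1 (vertex_map f) (vertex_map f^-1%g).
  by split; apply: level_hom_aut => //; [lia | apply: permK | lia | apply: permKV].
have [s fs] := @level_iso_perm 'I_N k.-1 _ _ ltac:(lia) ltac:(rewrite card_ord; lia) iso.
have flow v : #|val v| = k.-1 -> val (f v) = s @: val v by move=> cv; rewrite -vertex_mapE fs.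
exists s => v; case: (card_vertex v) => cv; first exact: flow.
apply/esym/eqP; rewrite eqEcard card_imset ?fc ?leqnn ?andbT; last exact: perm_inj.
apply/subsetP => _ /imsetP[x xv ->].
have [y yv yx] : exists2 y, y \in val v & y != x.
  have /card_gt1P[y [z [yv zv yz]]] : 1 < #|val v| by lia.
  by have [yx|] := eqVneq y x; [exists z; rewrite // -yx eq_sym | exists y].
have cvy : #|val v :\ y| = k.-1.
  by move: (val v) yv cv => A yA; rewrite (cardsD1 y A) yA add1n => <-.
have : adj (lower_vertex cvy) v by rewrite LGadj_lower //= cv eqxx subsetDl.
rewrite -fa LGadj_lower ?fc // (flow (lower_vertex cvy) cvy) => /andP[_ /subsetP]; apply.
by rewrite mem_imset_perm !inE eq_sym yx.
Qed.

Section Coloring.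
Variable F : pred {set 'I_N}.

Definition LGcol v : 'I_3 :=
  if #|val v| == k.-1 then ord0 else if F (val v) then inord 2 else inord 1.

Lemma LGcol0 v : (LGcol v == ord0) = (#|val v| == k.-1).
Proof. by rewrite /LGcol; case: ifP => // _; case: ifP; rewrite -val_eqE /= inordK. Qed.

Lemma LGcol_proper : proper_col adj LGcol.
Proof.
have kk : (k == k.-1) = false by lia.
have kk' : (k.-1 == k) = false by lia.
move=> u v; apply: contraTneq => /(congr1 (fun c => c == ord0)); rewrite !LGcol0 /LGadj.
by case: (card_vertex u) (card_vertex v) => -> [] ->; rewrite ?eqxx ?kk ?kk'.
Qed.

Lemma LGcol_distinguishing : 1 < k < N -> (forall B, F B -> #|B| = k) -> rigid_family F ->
  distinguishing adj LGcol.
Proof.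
move=> kN Fk Frigid f fa fc.
have kk : (k == k.-1) = false by lia.
have fsize v : #|val (f v)| = #|val v|.
  move/(congr1 (fun c => c == ord0)): (fc v); rewrite !LGcol0.
  by case: (card_vertex v) (card_vertex (f v)) => -> [] ->; rewrite ?eqxx ?kk.
have [s fs] := LGaut_perm kN fa fsize.
suff s1 : s = 1%g by apply/permP => v; apply/val_inj; rewrite fs s1 perm1 imset_perm1.
apply: Frigid; apply: perm_blocks_stable Fk _ => B cB; move: (fc (upper_vertex cB)).
rewrite /LGcol fsize fs /= cB kk.
by do 2 case: (F _) => //; move/(congr1 val); rewrite /= !inordK.
Qed.
End Coloring.

Lemma LGchiD3 (F : pred {set 'I_N}) : 1 < k < N -> (forall B, F B -> #|B| = k) ->
  rigid_family F -> chiD_is adj 3.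
Proof.
move=> kN Fk Frigid; split; last by move=> m [c [pc dc]]; apply: distinguishing_ge3 pc dc.
by exists (LGcol F); split; [apply: LGcol_proper | apply: LGcol_distinguishing].
Qed.
End LineGraph.

Theorem mainTheorem4 (k n : nat) :
  2 <= k -> n0 k <= n -> chiD_is (@LGadj n k) 3.
Proof.
move=> k2; rewrite /n0; case: n => [|n] kn; first by case: (k == 2) kn; lia.
have k0 : 0 < k by lia.
have [k2E|k2'] := eqVneq k 2; rewrite ?k2E ?(negbTE k2') /= in kn.
- subst k; apply: (@LGchiD3 n 2 k0 (interval_blocks 2 (short_block n))); first lia.
    exact: card_interval_blocks (card_short_block kn).
  exact: short_blocks_rigid.
- have k3 : 3 <= k by lia.
  apply: (@LGchiD3 n k k0 (interval_blocks k (long_block n k))); first lia.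
    exact: card_interval_blocks (card_long_block k3 kn).
  exact: long_blocks_rigid.
Qed.
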